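(* Let $\underline{t}$ and $\underline{u}$ be increment arrays for $n$ agents with $\underline{t}\not\approx\underline{u}$. Then \[\bigcup_{i=1}^{n}\{C(i,\underline{t})\}\;\cap\;\bigcup_{i=1}^{n}\{C(i,\underline{u})\}=\varnothing,\] i.e.\ no coalition is generated both by $\underline{t}$ (from some starting agent) and by $\underline{u}$ (from some starting agent).
   Context: Agent identifiers are $\{1,\ldots,n\}$, arithmetic on identifiers is modulo $n$ with representatives in $\{1,\ldots,n\}$ (a value $0$ is replaced by $n$). An increment array (IA) of size $s$ ($1\le s\le n$) for $n$ agents is a tuple $\underline{t}=\langle t_0,\ldots,t_{s-1}\rangle$ of non-negative integers with $\sum t_i=n-s$. Cumulative increments: $\varphi_1=0$, $\varphi_i=\sum_{k=0}^{i-2}(t_k+1)$ for $2\le i\le s+1$. The coalition generated from $x$ is $C(x,\underline{t})=\{x\}\cup\bigcup_{i=2}^{s}\{(x+\varphi_i)\bmod n\}$ (residues in $\{1,\ldots,n\}$). Two IAs are equivalent, $\underline{t}\approx\underline{u}$, if they have the same size $s$ and $\underline{u}$ is a circular shift of $\underline{t}$: there is $0\le k\le s-1$ with $\langle u_0,\ldots,u_{s-1}\rangle=\langle t_k,\ldots,t_{s-1},t_0,\ldots,t_{k-1}\rangle$. *)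

From mathcomp Require Import all_boot.
Set Implicit Arguments. Unset Strict Implicit. Unset Printing Implicit Defensive.

(* Agent identifiers are 1..n; residue of x modulo n with representative in {1..n}. *)
Definition resid (n x : nat) : nat := if x %% n == 0 then n else x %% n.

Definition is_IA (n : nat) (t : seq nat) : Prop :=
  0 < size t <= n /\ sumn t = n - size t.

Definition phi (t : seq nat) (i : nat) : nat :=
  \sum_(0 <= k < i.-1) (nth 0 t k).+1.

(* The coalition generated from x: { x } u { (x + phi i) mod n | 2 <= i <= s },
   given as a list of agents (a set via membership). *)
Definition coalition (n x : nat) (t : seq nat) : seq nat :=
  x :: [seq resid n (x + phi t i) | i <- iota 2 (size t).-1].

Definition IA_equiv (t u : seq nat) : Prop :=
  size t = size u /\ exists2 k, k < size t & u = rot k t.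

(* An increment array t for n agents is encoded by the bit string [enc t] of
   length n in which every entry t_k becomes a 1 followed by t_k zeros; the 1s
   sit exactly at the cumulative increments.  The coalition generated from x is
   the translate by x (mod n) of this set of positions, so two equal coalitions
   make the two bit strings cyclic rotations of each other.  Every encoding
   starts with a 1, so the rotation starts at a block boundary, i.e. it is the
   encoding of a circular shift of the array; [enc] being injective, the two
   arrays are equivalent. *)

From mathcomp Require Import all_boot.
From mathcomp Require Import zify.

Set Implicit Arguments.
Unset Strict Implicit.
Unset Printing Implicit Defensive.

Definition enc (t : seq nat) : seq bool :=
  flatten [seq true :: nseq a false | a <- t].

Lemma enc_cons a t : enc (a :: t) = true :: nseq a false ++ enc t.
Proof. by []. Qed.

Lemma enc_cat t u : enc (t ++ u) = enc t ++ enc u.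
Proof. by rewrite /enc map_cat flatten_cat. Qed.

Lemma size_enc t : size (enc t) = sumn t + size t.
Proof. by elim: t => //= a t IH; rewrite size_cat size_nseq IH addnS addnA. Qed.

Lemma size_enc_IA n t : is_IA n t -> size (enc t) = n.
Proof. by move=> [/andP[_ ?] ?]; rewrite size_enc; lia. Qed.

Lemma find_nseq_enc a t : find id (nseq a false ++ enc t) = a.
Proof.
by rewrite find_cat has_nseq size_nseq andbF; case: t => [|b t]; rewrite addn0.
Qed.

Lemma enc_inj : injective enc.
Proof.
elim=> [|a t IH] [|b u] //; rewrite !enc_cons => -[eq_ab].
have ab : a = b by rewrite -(find_nseq_enc a t) eq_ab find_nseq_enc.
subst b; congr (_ :: _); apply: IH.
by move/eqP: eq_ab; rewrite eqseq_cat ?size_nseq // => /andP[_ /eqP].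
Qed.

Lemma enc_block_start t m : nth false (enc t) m ->
  exists2 k, k < size t & m = size (enc (take k t)).
Proof.
elim: t m => [|a t IH] [|m] //=; first by exists 0.
rewrite nth_cat size_nseq; case: ltnP => [lt_ma|le_am].
  by rewrite nth_nseq lt_ma.
move=> /IH [k lt_kt eq_m]; exists k.+1 => //.
by rewrite /= size_cat size_nseq -eq_m; lia.
Qed.

Lemma rot_enc_take t k : rot (size (enc (take k t))) (enc t) = enc (rot k t).
Proof.
by rewrite -{2}(cat_take_drop k t) enc_cat rot_size_cat -enc_cat /rot.
Qed.

Lemma rot_enc_block t r : nth false (enc t) r ->
  exists2 k, k < size t & rot r (enc t) = enc (rot k t).
Proof.
by move=> /enc_block_start [k lt_kt ->]; exists k; rewrite ?rot_enc_take.
Qed.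

Lemma nth_rot (T : Type) (x0 : T) (s : seq T) r d :
  r < size s -> d < size s -> nth x0 (rot r s) d = nth x0 s ((d + r) %% size s).
Proof.
move=> lt_rs lt_ds; rewrite /rot nth_cat size_drop.
case: ltnP => [lt_d|le_d].
  by rewrite nth_drop [r + d]addnC modn_small //; lia.
rewrite nth_take; last by lia.
have -> : d + r = (d - (size s - r)) + size s by lia.
by rewrite modnDr modn_small //; lia.
Qed.

Definition cumul_incr (t : seq nat) : seq nat := map (phi t) (iota 1 (size t)).

Lemma phi1 t : phi t 1 = 0.
Proof. by rewrite /phi big_geq. Qed.

Lemma phiS a t i : 0 < i -> phi (a :: t) i.+1 = a.+1 + phi t i.
Proof. by case: i => [|i] // _; rewrite /phi /= big_nat_recl. Qed.

Lemma cumul_incr_cons a t : cumul_incr (a :: t) = 0 :: map (addn a.+1) (cumul_incr t).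
Proof.
rewrite /cumul_incr /= phi1; congr (_ :: _).
rewrite -[2]/(1 + 1) iotaDl -!map_comp.
by apply/eq_in_map => i; rewrite mem_iota => /andP[i_gt0 _] /=; rewrite add1n phiS.
Qed.

Lemma nth_enc t d : nth false (enc t) d = (d \in cumul_incr t).
Proof.
elim: t d => [|a t IH] [|d] //; rewrite enc_cons cumul_incr_cons /= in_cons //=.
rewrite nth_cat size_nseq; case: ltnP => [lt_da|le_ad].
  by rewrite nth_nseq lt_da; apply/esym/negbTE/mapP => -[x _]; lia.
have -> : d.+1 = a.+1 + (d - a) by lia.
by rewrite mem_map ?IH //; apply: addnI.
Qed.

Lemma eq_resid n y z : 0 < n -> (resid n y == resid n z) = (y == z %[mod n]).
Proof.
move=> n_gt0; rewrite /resid.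
have := ltn_pmod y n_gt0; have := ltn_pmod z n_gt0.
by case: (y %% n =P 0); case: (z %% n =P 0) => *; apply/eqP/eqP; lia.
Qed.

Lemma coalitionE n x t : 1 <= x <= n -> 0 < size t ->
  coalition n x t = [seq resid n (x + p) | p <- cumul_incr t].
Proof.
move=> /andP[x_gt0 le_xn]; rewrite /coalition /cumul_incr.
case: (size t) => [|s] //= _; rewrite phi1 addn0 -map_comp; congr (_ :: _).
rewrite /resid; case: (ltngtP x n) le_xn => [lt_xn|//|->] _.
  by rewrite modn_small ?ifN //; lia.
by rewrite modnn.
Qed.

Lemma mem_coalition n x t d : is_IA n t -> 1 <= x <= n -> d < n ->
  (resid n (x + d) \in coalition n x t) = nth false (enc t) d.
Proof.
move=> IAt x_n lt_dn; have [/andP[t_gt0 _] _] := IAt; have n_gt0 : 0 < n by lia.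
rewrite coalitionE // nth_enc; apply/mapP/idP => [[p p_t]|]; last by exists d.
have lt_pn : p < n.
  rewrite -(size_enc_IA IAt); move: p_t; rewrite -nth_enc.
  by case: ltnP => // /(nth_default false) ->.
by move/eqP; rewrite eq_resid // eqn_modDl !modn_small // => /eqP ->.
Qed.

Lemma enc_rot_of_coalition n t u i j :
  is_IA n t -> is_IA n u -> 1 <= i <= n -> 1 <= j <= n ->
  coalition n i t =i coalition n j u -> enc t = rot ((i + n - j) %% n) (enc u).
Proof.
move=> IAt IAu i_n j_n eq_C; have n_gt0 : 0 < n by lia.
apply: (@eq_from_nth _ false).
  by rewrite size_rot (size_enc_IA IAt) (size_enc_IA IAu).
move=> d; rewrite (size_enc_IA IAt) => lt_dn.
rewrite nth_rot (size_enc_IA IAu) ?ltn_pmod //.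
rewrite -(mem_coalition IAt i_n lt_dn) eq_C -(mem_coalition IAu j_n) ?ltn_pmod //.
suff -> : resid n (j + (d + (i + n - j) %% n) %% n) = resid n (i + d) by [].
apply/eqP; rewrite eq_resid // modnDmr addnA modnDmr.
have -> : j + d + (i + n - j) = i + d + n by lia.
by rewrite modnDr.
Qed.

Theorem lemma5 (n : nat) (t u : seq nat) :
  is_IA n t -> is_IA n u -> ~ IA_equiv t u ->
  forall i j : nat, 1 <= i <= n -> 1 <= j <= n ->
    ~ (coalition n i t =i coalition n j u).
Proof.
move=> IAt IAu not_equiv i j i_n j_n eq_C; have n_gt0 : 0 < n by lia.
set r := (j + n - i) %% n.
have enc_u : enc u = rot r (enc t).
  by apply: enc_rot_of_coalition => // x; rewrite eq_C.
have block_r : nth false (enc t) r.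
  have : nth false (enc u) 0 by case: IAu => /andP[+ _] _; case: (u).
  by rewrite enc_u nth_rot (size_enc_IA IAt) ?ltn_pmod // modn_mod.
have [k lt_kt enc_rot] := rot_enc_block block_r.
have u_rot : u = rot k t by apply: enc_inj; rewrite enc_u enc_rot.
by apply: not_equiv; split; [rewrite u_rot size_rot | exists k].
Qed.
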